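(* If $\mathcal C$ is a Baker class, then $\mathcal C^{(d)}$ is a Baker class for every integer $d\ge1$.
   Context: A layering of a graph $G$ is a function $\lambda:V(G)\to\mathbb{Z}$ with $|\lambda(u)-\lambda(v)|\le1$ for every edge $uv$; its width is $\sup_{i\in\mathbb Z}|\lambda^{-1}(i)|$. For $P\subseteq V(G)$, a layering $\lambda$ of $G[P]$ is $G$-geodesic if $d_G(x,y)\ge|\lambda(x)-\lambda(y)|$ for all $x,y\in P$ ($d_G$ the distance in $G$, $\infty$ between different components). An ordered graph is a finite graph with a linear ordering of its vertices; subgraphs inherit the restricted ordering. For an infinite sequence $\mathbf r=r_1,r_2,\dots$ of positive integers and an integer $s\ge0$, let $\mathrm{tail}_s(\mathbf r)=r_{s+1},r_{s+2},\dots$, $\mathrm{tail}(\mathbf r)=\mathrm{tail}_1(\mathbf r)$ and $\mathrm{head}(\mathbf r)=r_1$. The Baker game between Destroyer and Preserver has states $(G,\mathbf r)$ with $G$ an ordered graph and $\mathbf r$ an infinite sequence of positive integers. If $V(G)=\emptyset$ the game stops. Otherwise, in one round Destroyer chooses either Delete (the smallest vertex $v$ of $G$ is removed and the game proceeds to $(G-v,\mathrm{tail}(\mathbf r))$) or Restrict (Destroyer chooses a layering $\lambda$ of $G$, Preserver chooses an interval $I$ of at most $\mathrm{head}(\mathbf r)$ consecutive integers, and the game proceeds to $(G[\lambda^{-1}(I)],\mathrm{tail}(\mathbf r))$). Destroyer wins on $(G,\mathbf r)$ in $t$ rounds if he has a strategy such that, regardless of Preserver's choices, the game stops after at most $t$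 rounds. A class $\mathcal C$ of ordered graphs is a Baker class if for every infinite sequence $\mathbf r$ of positive integers there is an integer $t$ such that for every $G\in\mathcal C$, Destroyer wins the Baker game on $(G,\mathbf r)$ in $t$ rounds. A partition $\mathcal P$ of an ordered graph $G$ (ordering $\prec$) is a sequence $P_1,\dots,P_m$ of pairwise disjoint sets with union $V(G)$ such that $u\prec v$ whenever $u\in P_i$, $v\in P_j$, $i<j$. It is width-$d$ geodesic if for each $i\in\{1,\dots,m\}$, $G[P_i]$ has a $G[P_i\cup P_{i+1}\cup\dots\cup P_m]$-geodesic layering of width at most $d$. $G/\mathcal P$ is the ordered graph obtained from $G$ by identifying the vertices of each part into a single vertex and suppressing loops and parallel edges, with vertices ordered as the sequence of parts. $\mathcal C^{(d)}$ is the class of ordered graphs $G$ having a width-$d$ geodesic partition $\mathcal P$ with $G/\mathcal P\in\mathcal C$. *)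

From HB Require Import structures.
From mathcomp Require Import all_boot all_order all_algebra.
Set Implicit Arguments. Unset Strict Implicit. Unset Printing Implicit Defensive.
Import Order.TTheory GRing.Theory Num.Theory.

(* An ordered graph: a finite vertex set of natural numbers (given by a
   sequence; only membership matters), ordered by the natural order of nat,
   and an adjacency relation. *)
Record ograph := OGraph { overt : seq nat; oadj : rel nat }.

Definition edge (G : ograph) (x y : nat) : bool :=
  [&& x \in overt G, y \in overt G, x != y & oadj G x y || oadj G y x].

Definition induced (G : ograph) (S : pred nat) : ograph :=
  OGraph [seq x <- overt G | S x] (oadj G).

(* smallest vertex (meaningful when the vertex set is nonempty) *)
Definition minv (G : ograph) : nat := foldr minn (head 0 (overt G)) (overt G).

Definition delete_min (G : ograph) : ograph :=
  induced G (fun x => x != minv G).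

Definition layering (G : ograph) (lam : nat -> int) : Prop :=
  forall u v, edge G u v -> (absz (lam u - lam v) <= 1)%N.

Definition width_le (G : ograph) (lam : nat -> int) (d : nat) : Prop :=
  forall i : int, (count (fun x => lam x == i) (undup (overt G)) <= d)%N.

Fixpoint walk (G : ograph) (k : nat) (x y : nat) : bool :=
  if k is k'.+1 then has (fun z => edge G x z && walk G k' z y) (overt G)
  else (x == y) && (x \in overt G).

(* lam is a layering of H[P] which is H-geodesic:
   d_H(x,y) >= |lam x - lam y| for x, y in P, i.e. every walk in H from x to
   y has length at least |lam x - lam y| (d_H = infinity if there is none). *)
Definition geodesic_layering (H : ograph) (P : pred nat) (lam : nat -> int) : Prop :=
  layering (induced H P) lam /\
  forall x y, x \in overt H -> y \in overt H -> P x -> P y ->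
    forall k, walk H k x y -> (absz (lam x - lam y) <= k)%N.

Definition is_partition (G : ograph) (parts : seq (seq nat)) : Prop :=
  [/\ (forall i, (i < size parts)%N -> nth [::] parts i != [::]),
      (forall i x, x \in nth [::] parts i -> x \in overt G),
      (forall x, x \in overt G -> exists2 i, (i < size parts)%N & x \in nth [::] parts i),
      (forall i j x, i != j -> x \in nth [::] parts i -> x \notin nth [::] parts j) &
      (forall i j u v, (i < j)%N -> u \in nth [::] parts i -> v \in nth [::] parts j ->
         (u < v)%N)].

Definition geodesic_partition (d : nat) (G : ograph) (parts : seq (seq nat)) : Prop :=
  forall i, (i < size parts)%N ->
    exists lam : nat -> int,
      let H := induced G (fun x => x \in flatten (drop i parts)) in
      geodesic_layering H (fun x => x \in nth [::] parts i) lam /\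
      width_le (induced G (fun x => x \in nth [::] parts i)) lam d.

Definition quotient (G : ograph) (parts : seq (seq nat)) : ograph :=
  OGraph (iota 0 (size parts))
    (fun i j => (i != j) &&
       has (fun x => has (fun y => edge G x y) (nth [::] parts j)) (nth [::] parts i)).

Definition rtail (r : nat -> nat) : nat -> nat := fun i => r i.+1.

Fixpoint destroyer_wins (t : nat) (G : ograph) (r : nat -> nat) : Prop :=
  if t is t'.+1 then
    overt G = [::] \/
    destroyer_wins t' (delete_min G) (rtail r) \/
    (exists lam : nat -> int, layering G lam /\
       forall (a : int) (k : nat), (k <= r 0)%N ->
         destroyer_wins t'
           (induced G (fun x => (a <= lam x)%R && (lam x < a + k%:Z)%R)) (rtail r))
  else overt G = [::].

Definition baker_class (C : ograph -> Prop) : Prop :=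
  forall r : nat -> nat, (forall i, (0 < r i)%N) ->
    exists t : nat, forall G, C G -> destroyer_wins t G r.

Definition class_d (C : ograph -> Prop) (d : nat) (G : ograph) : Prop :=
  exists parts : seq (seq nat),
    [/\ is_partition G parts, geodesic_partition d G parts & C (quotient G parts)].

From mathcomp Require Import all_boot all_order all_algebra.
From mathcomp Require Import zify.
From Stdlib Require Import ClassicalEpsilon.
Set Implicit Arguments. Unset Strict Implicit. Unset Printing Implicit Defensive.
Import Order.TTheory GRing.Theory Num.Theory.

(* Destroyer plays on G by simulating a winning strategy on the quotient
   H = G/P.  A quotient round played with budget r' j costs 1 + d * r' j
   rounds on G, so the quotient game is fed the subsequence
   r' j = r (phase_start j), with phase_start (j+1) = phase_start j + 1 + d * r' j.
   - A Restrict with a layering mu of H is answered by the layering mu o part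
     of G (an edge of G joins equal or adjacent parts), and the remaining
     rounds of the phase are wasted.
   - A Delete of the smallest part P_i is answered by a Restrict with a
     layering of the current graph extending the geodesic layering of P_i
     (v |-> min over x in P_i of lam x + dist(x, v)); the chosen window of at
     most r' j layers keeps at most d * r' j vertices of P_i, and these are
     then deleted one by one: they are the smallest vertices left. *)

Lemma edge_sym G x y : edge G x y = edge G y x.
Proof. by rewrite /edge eq_sym orbC; case: (x \in _); case: (y \in _). Qed.

Lemma edge_verts G x y : edge G x y -> (x \in overt G) && (y \in overt G).
Proof. by case/and4P=> -> ->. Qed.

Lemma edge_induced G S x y : edge (induced G S) x y = [&& S x, S y & edge G x y].
Proof.
rewrite /edge /= !mem_filter.
by case: (S x); case: (S y); case: (x \in _); case: (y \in _).
Qed.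

Definition subgraph (G' G : ograph) : Prop :=
  {subset overt G' <= overt G} /\ (forall x y, edge G' x y -> edge G x y).

Lemma subgraph_trans G1 G2 G3 : subgraph G1 G2 -> subgraph G2 G3 -> subgraph G1 G3.
Proof. by move=> [V12 E12] [V23 E23]; split=> [x /V12/V23|x y /E12/E23]. Qed.

Lemma induced_subgraph G S : subgraph (induced G S) G.
Proof.
by split=> [x|x y]; rewrite ?mem_filter ?edge_induced; [case/andP|case/and3P].
Qed.

Lemma subgraph_induced G' G S : subgraph G' G -> subgraph (induced G' S) (induced G S).
Proof.
move=> [V E]; split=> [x|x y]; rewrite ?mem_filter ?edge_induced.
  by case/andP=> -> /V.
by case/and3P=> -> -> /E.
Qed.

Lemma no_vertex G : (forall x, x \notin overt G) -> overt G = [::].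
Proof. by case: (overt G) => // a s /(_ a); rewrite inE eqxx. Qed.

Lemma subgraph_empty G' G : subgraph G' G -> overt G = [::] -> overt G' = [::].
Proof. by move=> [V _] E; apply: no_vertex => x; apply/negP=> /V; rewrite E. Qed.

Lemma foldr_minn_spec b s :
  (foldr minn b s \in b :: s) && all (fun x => foldr minn b s <= x) (b :: s).
Proof.
elim: s => [|a s /andP[IHin /andP[IHb IHs]]] /=; first by rewrite inE eqxx leqnn.
rewrite !inE geq_minl geq_min IHb orbT /= andbC.
apply/andP; split.
  by apply/allP=> x xs; rewrite geq_min (allP IHs x xs) orbT.
rewrite /minn; case: ifP => _; first by rewrite eqxx orbT.
by move: IHin; rewrite inE; case/orP=> ->; rewrite ?orbT.
Qed.

Lemma minv_in G : overt G != [::] -> minv G \in overt G.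
Proof.
rewrite /minv; case: (overt G) => // a s _.
have /andP[min_in _] := foldr_minn_spec a (a :: s).
by move: min_in; rewrite /= [in X in X -> _]inE => /predU1P[->|]; rewrite ?mem_head.
Qed.

Lemma minv_le G x : x \in overt G -> minv G <= x.
Proof.
move=> xG; case/andP: (foldr_minn_spec (head 0 (overt G)) (overt G)) => _ /allP.
by apply; rewrite inE xG orbT.
Qed.

Lemma minv_subgraph G' G : subgraph G' G -> minv G \in overt G' -> minv G' = minv G.
Proof.
move=> [V _] vG'; apply/eqP; rewrite eqn_leq minv_le //= minv_le //.
by apply/V/minv_in; apply/eqP=> E; rewrite E in vG'.
Qed.

Lemma layering_subgraph G' G lam : subgraph G' G -> layering G lam -> layering G' lam.
Proof. by move=> [_ E] L u v /E; apply: L. Qed.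

(* The flat layering: a Restrict that changes nothing essential. *)
Lemma flat_layering G : layering G (fun _ => 0%R).
Proof. by move=> u v _; rewrite subrr. Qed.

Lemma wins_empty t G r : overt G = [::] -> destroyer_wins t G r.
Proof. by case: t => [|t] /= ->; [|left]. Qed.

Lemma wins_ext t G r r' : destroyer_wins t G r -> r =1 r' -> destroyer_wins t G r'.
Proof.
elim: t G r r' => [//|t IH] G r r' /= W Er.
have Etail : rtail r =1 rtail r' by move=> i; apply: Er.
case: W => [E|[D|[lam [L W]]]]; [by left|by right; left; apply: IH D Etail|].
right; right; exists lam; split=> // a k; rewrite -Er => kr.
exact: IH (W a k kr) Etail.
Qed.

(* Destroyer wins on every subgraph of a graph he wins on, within the same
   number of rounds: a Delete whose vertex is absent is replaced by a flat
   Restrict. *)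
Lemma wins_subgraph t G G' r : destroyer_wins t G r -> subgraph G' G -> destroyer_wins t G' r.
Proof.
elim: t G G' r => [|t IH] G G' r /=; first by move=> E S; apply: subgraph_empty S E.
case=> [E S|[D S|[lam [L W]] S]]; first by left; apply: subgraph_empty S E.
- have [vG'|vG'] := boolP (minv G \in overt G').
    right; left; rewrite /delete_min (minv_subgraph S vG').
    exact: IH D (subgraph_induced _ S).
  right; right; exists (fun _ => 0%R); split=> [|a k _]; first exact: flat_layering.
  apply: IH D (subgraph_trans (induced_subgraph _ _) _).
  have notv x : x \in overt G' -> x != minv G by apply: contraTneq => ->.
  case: S => [V E]; split=> [x xG'|x y e]; first by rewrite mem_filter V ?notv.
  case/andP: (edge_verts e) => xG' yG'; by rewrite edge_induced !notv ?E.
- right; right; exists lam; split; first exact: layering_subgraph S L.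
  by move=> a k kr; apply: IH (W a k kr) (subgraph_induced _ S).
Qed.

Lemma wins_pad n t G r :
  destroyer_wins t G (fun i => r (n + i)) -> destroyer_wins (n + t) G r.
Proof.
elim: n r => [|n IH] r W; first exact: wins_ext W _.
rewrite addSn /=; right; right; exists (fun _ => 0%R); split=> [|a k _].
  exact: flat_layering.
apply: wins_subgraph (induced_subgraph _ _); apply: IH.
by apply: wins_ext W _ => i; rewrite /rtail addSn.
Qed.

Lemma walk_subgraph G H k x y : subgraph G H -> walk G k x y -> walk H k x y.
Proof.
move=> [V E]; elim: k x => [|k IH] x /=; first by case/andP=> -> /V.
case/hasP=> z zG /andP[e w]; apply/hasP; exists z; first exact: V.
by rewrite E // IH.
Qed.

Lemma walk_snoc G k x u v : walk G k x u -> edge G u v -> walk G k.+1 x v.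
Proof.
elim: k x => [|k IH] x /=.
  case/andP=> /eqP-> uG e; case/andP: (edge_verts e) => _ vG.
  by apply/hasP; exists v; rewrite // e eqxx.
by case/hasP=> z zG /andP[e w] e'; apply/hasP; exists z; rewrite // e; exact: IH w e'.
Qed.

(* Let lam be a layering of a vertex set P
   that is geodesic in a graph Hm, and let G be a subgraph of Hm.  Then
   v |-> min { lam x + k | x in P, walk of length k in G from x to v }
   is a layering of G which agrees with lam on P.  The minimum is taken over
   naturals after shifting lam by a large offset. *)
Section LayeringExtension.

Variables (G Hm : ograph) (P : seq nat) (lam : nat -> int).

Let offset : nat := \max_(y <- overt G) absz (lam y).

Lemma shifted_ge0 x : x \in overt G -> (0 <= lam x + offset%:Z)%R.
Proof.
move=> xG; have := @leq_bigmax_seq _ _ xpredT (fun y => absz (lam y)) x xG isT.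
by rewrite -/offset; lia.
Qed.

Definition reach (v n : nat) : bool :=
  has (fun x => (x \in P) && has (fun k => walk G k x v &&
     (absz (lam x + offset%:Z)%R + k == n)) (iota 0 n.+1)) (overt G).

Lemma reachP v n :
  reflect (exists x k, [/\ x \in overt G, x \in P, walk G k x v &
                          absz (lam x + offset%:Z)%R + k = n]) (reach v n).
Proof.
apply: (iffP hasP) => [[x xG /andP[xP /hasP[k _ /andP[w /eqP e]]]]|[x [k [xG xP w e]]]].
  by exists x, k.
exists x; rewrite // xP; apply/hasP; exists k; rewrite ?w ?e ?eqxx //.
by rewrite mem_iota; lia.
Qed.

Lemma reach_edge u v n : reach u n -> edge G u v -> reach v n.+1.
Proof.
move=> /reachP[x [k [xG xP w e]]] uv; apply/reachP; exists x, k.+1.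
by split=> //; [exact: walk_snoc w uv | lia].
Qed.

Definition extended_layering (v : nat) : int :=
  match excluded_middle_informative (exists n, reach v n) with
  | left e => ((ex_minn e)%:Z - offset%:Z)%R
  | right _ => 0%R
  end.

Lemma extended_layering_layering : layering G extended_layering.
Proof.
move=> u v uv; rewrite /extended_layering.
case: excluded_middle_informative => [eu|neu];
case: excluded_middle_informative => [ev|nev]; last by rewrite subrr.
- case: ex_minnP => nu ru least_u; case: ex_minnP => nv rv least_v.
  have := least_v _ (reach_edge ru uv); rewrite edge_sym in uv.
  have := least_u _ (reach_edge rv uv); lia.
- by case: eu => n rn; case: nev; exists n.+1; exact: reach_edge rn uv.
- by rewrite edge_sym in uv; case: ev => n rn; case: neu; exists n.+1; exact: reach_edge rn uv.
Qed.

Hypothesis G_Hm : subgraph G Hm.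
Hypothesis lam_geodesic : forall x y, x \in overt Hm -> y \in overt Hm -> x \in P -> y \in P ->
  forall k, walk Hm k x y -> (absz (lam x - lam y) <= k)%N.

(* The geodesic condition makes every competitor lam x + k at least lam y. *)
Lemma extended_layering_agrees y : y \in overt G -> y \in P -> extended_layering y = lam y.
Proof.
move=> yG yP; rewrite /extended_layering.
have ry : reach y (absz (lam y + offset%:Z)%R).
  by apply/reachP; exists y, 0; split; rewrite ?addn0 //= eqxx yG.
case: excluded_middle_informative => [ey|]; last by case; eexists; exact: ry.
case: ex_minnP => ny /reachP[x [k [xG xP w e]]] least_y.
have := least_y _ ry; have := shifted_ge0 xG; have := shifted_ge0 yG.
have := lam_geodesic (proj1 G_Hm _ xG) (proj1 G_Hm _ yG) xP yP (walk_subgraph G_Hm w).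
lia.
Qed.

End LayeringExtension.

Lemma count_window (U : seq nat) (lam : nat -> int) d k (a : int) :
  (forall i : int, count (fun x => lam x == i) U <= d) ->
  count (fun x => (a <= lam x)%R && (lam x < a + k%:Z)%R) U <= k * d.
Proof.
move=> W; elim: k a => [|k IH] a.
  by rewrite (@eq_count _ _ pred0) ?count_pred0 // => x /=; lia.
apply: leq_trans (_ : count (predU (fun x => lam x == a)
   (fun x => (a + 1 <= lam x)%R && (lam x < (a + 1) + k%:Z)%R)) U <= _).
  by apply: sub_count => x /= h; lia.
rewrite mulSn; apply: leq_trans (leq_add (W a) (IH (a + 1)%R)).
by rewrite -count_predUI leq_addr.
Qed.

Lemma count_delete (s : seq nat) (p : pred nat) v : v \in s -> p v ->
  count p (undup [seq x <- s | x != v]) < count p (undup s).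
Proof.
move=> vs pv; rewrite -filter_undup count_filter.
have split_v : count (predI p (predC1 v)) (undup s) + count (predI p (pred1 v)) (undup s)
             = count p (undup s).
  rewrite -[RHS]addn0 -(count_pred0 (undup s)) -count_predUI.
  by congr (_ + _); apply: eq_count => x /=; case: (p x); case: (x == v).
rewrite -split_v -[X in X < _]addn0 ltn_add2l -has_count.
by apply/hasP; exists v; rewrite /= ?mem_undup ?pv ?eqxx.
Qed.

Lemma count_undup_le (s1 s2 : seq nat) (p1 p2 : pred nat) : uniq s1 ->
  (forall x, x \in s1 -> p1 x -> (x \in s2) && p2 x) -> count p1 s1 <= count p2 (undup s2).
Proof.
move=> s1_uniq incl; rewrite -!size_filter; apply: uniq_leq_size; first exact: filter_uniq.
move=> x; rewrite !mem_filter mem_undup => /andP[px xs].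
by case/andP: (incl x xs px) => -> ->.
Qed.

Lemma mem_flatten_drop (parts : seq (seq nat)) m i v :
  m <= i -> v \in nth [::] parts i -> v \in flatten (drop m parts).
Proof.
move=> le_mi vi; apply/flattenP; exists (nth [::] parts i) => //.
have lt_i : i < size parts by case: ltnP vi => // ge; rewrite nth_default.
rewrite -(subnKC le_mi) -nth_drop mem_nth // size_drop ltn_sub2r //.
exact: leq_ltn_trans le_mi lt_i.
Qed.

(* The part of a vertex, i.e. its vertex in the quotient. *)
Definition part (parts : seq (seq nat)) (v : nat) : nat := find (fun P => v \in P) parts.

Section Partition.

Variables (G0 : ograph) (parts : seq (seq nat)).
Hypothesis partP : is_partition G0 parts.

Lemma part_spec v : v \in overt G0 ->
  part parts v < size parts /\ v \in nth [::] parts (part parts v).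
Proof.
case: partP => _ _ cover _ _ /cover [i lt vi].
have has_v : has (fun P => v \in P) parts by apply/(has_nthP [::]); exists i.
by split; [rewrite -has_find | apply: (nth_find [::] has_v)].
Qed.

Lemma part_lt u v : u \in overt G0 -> v \in overt G0 ->
  part parts u < part parts v -> u < v.
Proof.
move=> uG vG lt; have [_ _ _ _ ordered] := partP.
by apply: (ordered _ _ _ _ lt); [case: (part_spec uG) | case: (part_spec vG)].
Qed.

Lemma quotient_edge u v : edge G0 u v ->
  part parts u != part parts v -> edge (quotient G0 parts) (part parts u) (part parts v).
Proof.
move=> e ne; case/andP: (edge_verts e) => uG vG.
have [lu iu] := part_spec uG; have [lv iv] := part_spec vG.
rewrite /edge /= !mem_iota /= lu lv ne /=.
by apply/orP; left; apply/hasP; exists u => //; apply/hasP; exists v.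
Qed.

(* The simulation invariant between a position H of the quotient game and a
   position G of the game on G0: H is an induced subgraph of G0/P, G is a
   subgraph of G0, and every vertex of G lies in a part that is a vertex of H. *)
Definition simulates (H G : ograph) : Prop :=
  [/\ oadj H = oadj (quotient G0 parts), {subset overt H <= iota 0 (size parts)},
      subgraph G G0 & forall v, v \in overt G -> part parts v \in overt H].

Lemma quotient_simulates : simulates (quotient G0 parts) G0.
Proof.
split=> //; first by split.
by move=> v vG; rewrite /= mem_iota /=; case: (part_spec vG).
Qed.

Lemma simulates_empty H G : simulates H G -> overt H = [::] -> overt G = [::].
Proof. by case=> _ _ _ partG E; apply: no_vertex => v; apply/negP=> /partG; rewrite E. Qed.

Lemma simulates_subgraph H G G' : simulates H G -> subgraph G' G -> simulates H G'.
Proof.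
case=> adjH vertH GG0 partG S; split=> //; first exact: subgraph_trans S GG0.
by move=> v /(proj1 S); apply: partG.
Qed.

Lemma simulates_edge H G u v : simulates H G -> edge G u v ->
  part parts u != part parts v -> edge H (part parts u) (part parts v).
Proof.
move=> [adjH _ [_ EG] partG] e ne; case/andP: (edge_verts e) => uG vG.
move: (quotient_edge (EG _ _ e) ne); rewrite /edge adjH !partG //.
by case/and4P=> _ _ -> ->.
Qed.

Lemma simulates_induced H G (S : pred nat) : simulates H G ->
  simulates (induced H S) (induced G (fun v => S (part parts v))).
Proof.
case=> adjH vertH GG0 partG; split=> //.
- by move=> x; rewrite mem_filter => /andP[_ /vertH].
- exact: subgraph_trans (induced_subgraph _ _) GG0.
by move=> v; rewrite !mem_filter => /andP[-> /partG].
Qed.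

Lemma simulates_delete H G : simulates H G ->
  count (fun v => part parts v == minv H) (undup (overt G)) = 0 ->
  simulates (delete_min H) G.
Proof.
case=> adjH vertH GG0 partG none; split=> //.
  by move=> x; rewrite mem_filter => /andP[_ /vertH].
move=> v vG; rewrite mem_filter partG // andbT.
apply/negP=> /eqP E; move/eqP: none; rewrite eqn0Ngt -has_count; case/negP.
by apply/hasP; exists v; rewrite ?mem_undup ?E.
Qed.

(* If some vertex of G lies in the smallest part of H, then so does the
   smallest vertex of G, since parts are ordered like their vertices. *)
Lemma minv_first_part H G y : simulates H G -> y \in overt G ->
  part parts y = minv H -> part parts (minv G) = minv H.
Proof.
case=> _ _ [VG _] partG yG py.
have vG : minv G \in overt G by apply: minv_in; apply/eqP=> E; rewrite E in yG.
apply/eqP; rewrite eqn_leq minv_le ?partG // andbT leqNgt; apply/negP => lt.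
have := part_lt (VG _ yG) (VG _ vG); rewrite py => /(_ lt).
by rewrite ltnNge minv_le.
Qed.

(* The deletion phase: at most n vertices of G lie in the smallest part of H;
   deleting them one by one takes n rounds, padded to exactly n. *)
Lemma deletion_phase H t (q : nat -> nat) n G : simulates H G ->
  count (fun v => part parts v == minv H) (undup (overt G)) <= n ->
  (forall G', simulates (delete_min H) G' -> destroyer_wins t G' (fun i => q (n + i))) ->
  destroyer_wins (n + t) G q.
Proof.
elim: n q G => [|n IH] q G I cnt cont.
  by apply: (@wins_pad 0); apply/cont/(simulates_delete I); lia.
have [none|] := posnP (count (fun v => part parts v == minv H) (undup (overt G))).
  by apply: (@wins_pad n.+1); apply/cont/(simulates_delete I).
rewrite -has_count => /hasP [y]; rewrite mem_undup => yG /eqP py.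
have vG : minv G \in overt G by apply: minv_in; apply/eqP=> E; rewrite E in yG.
rewrite addSn /=; right; left; apply: IH cont.
- exact: simulates_subgraph I (induced_subgraph _ _).
have := count_delete (p := fun v => part parts v == minv H) vG.
by rewrite /= (minv_first_part I yG py) eqxx => /(_ isT) lt; rewrite -ltnS (leq_trans lt).
Qed.

End Partition.

Section Simulation.

Variables (d : nat) (r : nat -> nat).

(* Round of the game on G at which the simulation of quotient round j starts;
   quotient round j is played with budget r (phase_start j) and costs
   1 + d * r (phase_start j) rounds on G. *)
Fixpoint phase_start (j : nat) : nat :=
  if j is j'.+1 then phase_start j' + (1 + d * r (phase_start j')) else 0.

Fixpoint phase_rounds (j t : nat) : nat :=
  if t is t'.+1 then (1 + d * r (phase_start j)) + phase_rounds j.+1 t' else 0.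

Lemma phase_rounds_S j t :
  phase_rounds j t.+1 = (d * r (phase_start j) + phase_rounds j.+1 t).+1.
Proof. by rewrite /= add1n addSn. Qed.

(* After the first round and n = d * r (phase_start j) further rounds of
   phase j, the game on G has reached phase j + 1. *)
Lemma phase_shift j i :
  rtail (fun i => r (phase_start j + i)) (d * r (phase_start j) + i) = r (phase_start j.+1 + i).
Proof. by rewrite /rtail /=; congr r; lia. Qed.

Variables (G0 : ograph) (parts : seq (seq nat)).
Hypothesis partP : is_partition G0 parts.
Hypothesis geoP : geodesic_partition d G0 parts.

(* Simulating a quotient Restrict with layering mu: Restrict with mu o part
   and waste the rest of the phase. *)
Lemma restrict_round j T H G (mu : nat -> int) :
  simulates G0 parts H G -> layering H mu ->
  (forall (a : int) k, k <= r (phase_start j) -> forall G',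
     simulates G0 parts (induced H (fun x => (a <= mu x)%R && (mu x < a + k%:Z)%R)) G' ->
     destroyer_wins T G' (fun i => r (phase_start j.+1 + i))) ->
  destroyer_wins (d * r (phase_start j) + T).+1 G (fun i => r (phase_start j + i)).
Proof.
move=> I mu_layering cont /=; right; right.
exists (fun v => mu (part parts v)); split=> [u v e|a k kr].
  have [->|ne] := eqVneq (part parts u) (part parts v); first by rewrite subrr.
  exact: mu_layering (simulates_edge partP I e ne).
apply: wins_pad; apply: wins_ext (cont a k _ _ (simulates_induced _ I)) _ => [|i].
  by rewrite addn0 in kr.
by rewrite phase_shift.
Qed.

(* Simulating a quotient Delete of the smallest part P_m: Restrict with an
   extension of the geodesic layering of P_m, then delete the at most
   d * r (phase_start j) remaining vertices of P_m. *)
Lemma delete_round j T H G : simulates G0 parts H G -> overt H != [::] ->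
  (forall G', simulates G0 parts (delete_min H) G' ->
     destroyer_wins T G' (fun i => r (phase_start j.+1 + i))) ->
  destroyer_wins (d * r (phase_start j) + T).+1 G (fun i => r (phase_start j + i)).
Proof.
move=> I H_nonempty cont; set m := minv H.
have [_ vertH [VG EG] partG] := I.
have m_lt : m < size parts by move: (vertH _ (minv_in H_nonempty)); rewrite mem_iota.
have [lam [[_ lam_geodesic] lam_width]] := geoP m_lt.
set Hm := induced G0 (fun x => x \in flatten (drop m parts)).
have G_Hm : subgraph G Hm.
  have inHm v : v \in overt G -> v \in flatten (drop m parts).
    move=> vG; have [_ iv] := part_spec partP (VG _ vG).
    exact: mem_flatten_drop (minv_le (partG _ vG)) iv.
  split=> [v vG|u v e]; first by rewrite mem_filter inHm // VG.
  by case/andP: (edge_verts e) => uG vG; rewrite edge_induced !inHm // EG.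
set L := extended_layering G (nth [::] parts m) lam.
rewrite /=; right; right; exists L; split=> [|a k kr].
  exact: extended_layering_layering.
apply: (deletion_phase partP (simulates_subgraph I (induced_subgraph _ _))); last first.
  by move=> G' I'; apply: wins_ext (cont G' I') _ => i; rewrite phase_shift.
have window_in_part x : x \in overt G -> part parts x == m ->
    x \in nth [::] parts m /\ L x = lam x.
  move=> xG /eqP px; have [_ ix] := part_spec partP (VG _ xG); rewrite px in ix.
  by split=> //; exact: (@extended_layering_agrees _ Hm _ _ G_Hm lam_geodesic x xG ix).
set part_m := overt (induced G0 (fun x => x \in nth [::] parts m)).
apply: (@leq_trans (count (fun x => (a <= lam x)%R && (lam x < a + k%:Z)%R) (undup part_m))).
  apply: count_undup_le (undup_uniq _) _ => x; rewrite mem_undup mem_filter.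
  move=> /andP[win xG] pxm; have [ix Lx] := window_in_part x xG pxm.
  by rewrite mem_filter ix VG //= -Lx.
apply: leq_trans (count_window _ _ lam_width) _.
by rewrite mulnC leq_mul2l -(addn0 (phase_start j)) kr orbT.
Qed.

Lemma simulation t H j G : simulates G0 parts H G ->
  destroyer_wins t H (fun i => r (phase_start (j + i))) ->
  destroyer_wins (phase_rounds j t) G (fun i => r (phase_start j + i)).
Proof.
have quotient_tail j' : rtail (fun i => r (phase_start (j' + i)))
    =1 (fun i => r (phase_start (j'.+1 + i))).
  by move=> i; rewrite /rtail addnS addSn.
elim: t H j G => [|t IH] H j G I.
  exact: simulates_empty I.
have [H_empty|H_nonempty] := eqVneq (overt H) [::].
  by move=> _; apply/wins_empty/(simulates_empty I).
rewrite phase_rounds_S.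
case=> [E|[D|[mu [mu_layering W]]]]; first by rewrite E eqxx in H_nonempty.
  apply: delete_round I H_nonempty _ => G' I'.
  exact: IH I' (wins_ext D (quotient_tail j)).
apply: restrict_round I mu_layering _ => a k kr G' I'.
by apply: IH I' (wins_ext (W a k _) (quotient_tail j)); rewrite addn0.
Qed.

End Simulation.

Theorem mainTheorem5 (C : ograph -> Prop) (d : nat) :
  (1 <= d)%N -> baker_class C -> baker_class (class_d C d).
Proof.
move=> _ C_baker r r_pos.
have [t win_quotient] := C_baker (fun j => r (phase_start d r j)) (fun j => r_pos _).
exists (phase_rounds d r 0 t) => G [parts [partP geoP quotient_in_C]].
have := simulation partP geoP (quotient_simulates partP) (j := 0) (win_quotient _ quotient_in_C).
by move/wins_ext; apply.
Qed.
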